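(* Let $n\ge 3$ and let $DW_n$ be the double wheel graph. Then $$\chi^+(DW_n)=\begin{cases}5n+1 & \text{if } n \text{ is even},\\ 7n-2 & \text{if } n \text{ is odd}.\end{cases}$$
   Context: The double wheel graph $DW_n=2C_n+K_1$ is obtained from the disjoint union of two cycles $C_n$ by adding one new vertex adjacent to every vertex of both cycles. For a proper colouring $c:V(G)\to\{1,\dots,k\}$ of a graph $G$ (colour $c_i$ identified with the integer $i$), its colouring sum is $\sum_{i=1}^k i\,\theta(c_i)=\sum_{v\in V(G)} c(v)$, where $\theta(c_i)$ is the number of vertices receiving colour $c_i$. The $\chi^+$-chromatic sum $\chi^+(G)$ is the maximum of the colouring sum over all proper colourings of $G$ using exactly $\chi(G)$ colours (the chromatic number), i.e. over all proper colourings $c:V(G)\to\{1,\dots,\chi(G)\}$. *)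

From mathcomp Require Import all_boot all_order.
Set Implicit Arguments. Unset Strict Implicit. Unset Printing Implicit Defensive.

(* A colouring with k colours: c : T -> 'I_k; the ordinal i stands for colour c_(i+1). *)
Definition properb (T : finType) (e : rel T) (k : nat) (c : {ffun T -> 'I_k}) : bool :=
  [forall x, forall y, e x y ==> (c x != c y)].

Definition colourable (T : finType) (e : rel T) (k : nat) : bool :=
  [exists c : {ffun T -> 'I_k}, properb e c].

(* Chromatic number: the least k such that e has a proper k-colouring
   (searched in 0..#|T|, which suffices for loopless graphs). *)
Definition chromatic_number (T : finType) (e : rel T) : nat :=
  find (colourable e) (iota 0 #|T|.+1).

Definition chi_plus (T : finType) (e : rel T) : nat :=
  \max_(c : {ffun T -> 'I_(chromatic_number e)} | properb e c)
     \sum_(v : T) (nat_of_ord (c v)).+1.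

(* Double wheel DW_n = 2C_n + K_1: vertices None (the hub) and Some (b, i),
   b : bool choosing the copy of the cycle, i : 'I_n its position. *)
Definition dw_vertex (n : nat) := option (bool * 'I_n).

Definition dw_adj (n : nat) : rel (dw_vertex n) :=
  fun x y =>
    match x, y with
    | None, None => false
    | None, Some _ => true
    | Some _, None => true
    | Some (b, i), Some (b', j) =>
        (b == b') && ((nat_of_ord j == (i.+1 %% n)) || (nat_of_ord i == (j.+1 %% n)))
    end.

From mathcomp Require Import all_boot zify.
Set Implicit Arguments. Unset Strict Implicit. Unset Printing Implicit Defensive.

(* The hub colour a cannot appear on
   the rims, so each rim is a proper colouring of C_n by the other colours.
   Summing [f i + f (i+1)] over the edges of a cycle counts every vertex twice,
   and each adjacent pair of distinct colours from a set {x < y < z} sums to at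
   most y + z, so 2 * (rim sum) <= n (y + z).  For odd n a rim needs three
   colours, so the smallest one x occurs; weighting it by y - x sharpens the
   bound by 2 (y - x).  Optimising over the hub colour gives 5n + 1 with three
   colours (n even) and 7n - 2 with four (n odd), and alternating colourings of
   the rims attain these values. *)

Lemma sum_ordS n (F : 'I_n -> nat) : \sum_(i < n) F (ordS i) = \sum_(i < n) F i.
Proof. by rewrite [RHS](reindex_inj (@ordS_inj n)). Qed.

Lemma sum_cycle_edges n (f : 'I_n -> nat) :
  \sum_(i < n) (f i + f (ordS i)) = 2 * \sum_(i < n) f i.
Proof. by rewrite big_split /= sum_ordS mul2n addnn. Qed.

Lemma cycle_sum_le n (f : 'I_n -> nat) M :
  (forall i, f i + f (ordS i) <= M) -> 2 * \sum_(i < n) f i <= n * M.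
Proof.
move=> hM; rewrite -sum_cycle_edges -[X in X * M]card_ord -sum_nat_const.
by apply: leq_sum => i _; exact: hM.
Qed.

Lemma two_colour_cycle_even n (f : 'I_n -> nat) y z :
  (forall i, f i != f (ordS i)) -> (forall i, f i = y \/ f i = z) -> ~~ odd n.
Proof.
move=> hf hv; pose h i := nat_of_bool (f i == y).
have edge i : h i + h (ordS i) = 1.
  by rewrite /h; move: (hf i); case: (hv i) => ->; case: (hv (ordS i)) => ->; lia.
have : 2 * \sum_(i < n) h i = n.
  by rewrite -sum_cycle_edges (eq_bigr _ (fun i _ => edge i)) sum_nat_const card_ord muln1.
by move=> <-; rewrite mul2n odd_double.
Qed.

Lemma odd_cycle_sum_le n (f : 'I_n -> nat) x y z : odd n -> x < y < z ->
  (forall i, f i != f (ordS i)) -> (forall i, f i = x \/ f i = y \/ f i = z) ->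
  2 * \sum_(i < n) f i + 2 * (y - x) <= n * (y + z).
Proof.
move=> on /andP[xy yz] hf hv.
pose g i := f i + (y - x) * (f i == x).
have edge i : g i + g (ordS i) <= y + z.
  rewrite /g; move: (hf i).
  by case: (hv i) => [->|[->|->]]; case: (hv (ordS i)) => [->|[->|->]]; lia.
have /existsP [i0 /eqP fi0] : [exists i, f i == x].
  apply: contraLR on => /existsPn nox; apply: (two_colour_cycle_even (y:=y) (z:=z) hf) => i.
  by case: (hv i) => [fx|//]; move: (nox i); rewrite fx eqxx.
have x_occurs : 1 <= \sum_(i < n) (f i == x) by rewrite (bigD1 i0) //= fi0 eqxx.
have := cycle_sum_le edge; rewrite /g big_split /= -big_distrr /=.
move: (\sum_(i < n) (f i == x)) x_occurs (y - x) => C hC d; nia.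
Qed.

Definition colour_sum (T : finType) k (c : {ffun T -> 'I_k}) : nat :=
  \sum_v (c v : nat).+1.

Lemma properb_neq (T : finType) (e : rel T) k (c : {ffun T -> 'I_k}) x y :
  properb e c -> e x y -> c x != c y.
Proof. by move=> /forallP /(_ x) /forallP /(_ y) /implyP. Qed.

Lemma triangle_colours (T : finType) (e : rel T) k (c : {ffun T -> 'I_k}) x y z :
  properb e c -> e x y -> e y z -> e x z -> 3 <= k.
Proof.
move=> hc /(properb_neq hc) hxy /(properb_neq hc) hyz /(properb_neq hc) hxz.
move: (c x) (c y) (c z) hxy hyz hxz => [u hu] [v hv] [w hw]; rewrite -!val_eqE /=; lia.
Qed.

Lemma properb_inord (T : finType) (e : rel T) k (col : T -> nat) :
  (forall v, col v <= k) -> (forall x y, e x y -> col x != col y) ->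
  properb e [ffun v => inord (col v) : 'I_k.+1].
Proof.
move=> hk hcol; apply/forallP => x; apply/forallP => y; apply/implyP => exy.
by rewrite !ffunE -val_eqE /= !inordK ?ltnS //; exact: hcol.
Qed.

Lemma chromatic_numberE (T : finType) (e : rel T) K :
  K <= #|T| -> colourable e K -> (forall k, k < K -> ~~ colourable e k) ->
  chromatic_number e = K.
Proof.
move=> hKT hK hlt; rewrite /chromatic_number -(subnKC hKT) -addnS iotaD find_cat.
have -> : has (colourable e) (iota 0 K) = false.
  by apply/negbTE/hasPn => j; rewrite mem_iota => /andP[_]; exact: hlt.
by rewrite size_iota add0n /= hK addn0.
Qed.

Lemma chi_plusE (T : finType) (e : rel T) k (c0 : {ffun T -> 'I_k}) m :
  chromatic_number e = k -> properb e c0 -> colour_sum c0 = m ->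
  (forall c : {ffun T -> 'I_k}, properb e c -> colour_sum c <= m) -> chi_plus e = m.
Proof.
move=> hk hc0 <- hmax; subst k; apply/eqP; rewrite eqn_leq.
by rewrite (leq_bigmax_cond _ hc0) andbT; apply/bigmax_leqP.
Qed.

Lemma cycle_sum_le_3colours n (f : 'I_n -> nat) a : 0 < n -> 0 < a <= 3 ->
  (forall i, f i != f (ordS i)) -> (forall i, 0 < f i <= 3 /\ f i != a) ->
  2 * \sum_(i < n) f i + a <= 5 * n + 1.
Proof.
move=> n_gt0 ha hf hv.
have edge i : f i + f (ordS i) <= 6 - a by move: (hf i) (hv i) (hv (ordS i)); lia.
have := cycle_sum_le edge; case: a ha {hv edge} => [|[|[|[|a]]]] //= _; lia.
Qed.

Lemma odd_cycle_sum_le_4colours n (f : 'I_n -> nat) a : odd n -> 3 <= n -> 0 < a <= 4 ->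
  (forall i, f i != f (ordS i)) -> (forall i, 0 < f i <= 4 /\ f i != a) ->
  2 * \sum_(i < n) f i + a <= 7 * n - 2.
Proof.
move=> on n_ge3 ha hf hv.
have key x y z : x < y < z -> (forall i, f i = x \/ f i = y \/ f i = z) ->
    2 * \sum_(i < n) f i + 2 * (y - x) <= n * (y + z).
  by move=> xyz; exact: odd_cycle_sum_le.
have n_odd : n = 2 * n./2 + 1 by rewrite addn1 mul2n -[LHS]odd_double_half on.
move: (n./2) n_odd (\sum_(i < n) f i) key => m n_odd S key.
case: a ha hv => [|[|[|[|[|a]]]]] //= _ hv.
- by have := key 2 3 4 isT (fun i => ltac:(have := hv i; lia)); lia.
- by have := key 1 3 4 isT (fun i => ltac:(have := hv i; lia)); lia.
- by have := key 1 2 4 isT (fun i => ltac:(have := hv i; lia)); lia.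
- by have := key 1 2 3 isT (fun i => ltac:(have := hv i; lia)); lia.
Qed.

Lemma sum_alternating m a b : \sum_(0 <= i < m.*2) (if odd i then a else b) = m * (a + b).
Proof.
elim: m => [|m IH]; first by rewrite big_geq.
by rewrite doubleS !big_nat_recr //= IH odd_double /=; lia.
Qed.

Section DoubleWheel.

Variable n : nat.
Implicit Types (b : bool) (i : 'I_n).

Lemma dw_adj_hub b i : dw_adj None (Some (b, i)).
Proof. by []. Qed.

Lemma dw_adj_rim b i : dw_adj (Some (b, i)) (Some (b, ordS i)).
Proof. by rewrite /= !eqxx. Qed.

Lemma card_dw_vertex : #|{: dw_vertex n}| = (n + n).+1.
Proof. by rewrite card_option card_prod card_bool card_ord mul2n addnn. Qed.

Lemma sum_dw_vertex (F : dw_vertex n -> nat) :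
  \sum_v F v = F None + \sum_b \sum_(i < n) F (Some (b, i)).
Proof.
rewrite (bigD1 None) //=; congr (_ + _).
rewrite (reindex_omap Some (fun x => x)) //=; last by case.
rewrite (eq_bigl predT) => [|p]; last by rewrite eqxx.
by rewrite pair_big; apply: eq_bigr => -[].
Qed.

Lemma dw_colour_sum_le k (c : {ffun dw_vertex n -> 'I_k}) B :
  (forall b, 2 * \sum_(i < n) (c (Some (b, i)) : nat).+1 + (c None).+1 <= B) ->
  colour_sum c <= B.
Proof.
move=> hB; rewrite /colour_sum sum_dw_vertex big_bool /=.
move: (hB true) (hB false) => /=.
move: (\sum_(i < n) _.+1) (\sum_(i < n) _.+1) (c None : nat) => S1 S2 a; lia.
Qed.

Definition dw_colouring k (h : nat) (g : nat -> nat) : {ffun dw_vertex n -> 'I_k.+1} :=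
  [ffun v : dw_vertex n => inord (if v is Some (_, i) then g i else h)].

Section Colouring.

Variables (k h : nat) (g : nat -> nat).
Hypotheses (h_le : h <= k) (g_le : forall j, j < n -> g j <= k).

Lemma dw_colouring_proper :
  (forall j, j < n -> g j != h) -> (forall j, j < n -> g j != g (j.+1 %% n)) ->
  properb (@dw_adj n) (dw_colouring k h g).
Proof.
move=> gh gg; apply: properb_inord => [[[b i]|] //|]; first exact: g_le.
move=> [[b i]|] [[b' j]|] //=; last by rewrite eq_sym gh.
- move=> /andP[_ /orP[/eqP -> | /eqP ->]]; first exact: gg.
  by rewrite eq_sym gg.
- by move=> _; apply: gh.
Qed.

Lemma colour_sum_dw_colouring :
  colour_sum (dw_colouring k h g) = h.+1 + 2 * \sum_(0 <= j < n) (g j).+1.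
Proof.
rewrite big_mkord /colour_sum sum_dw_vertex big_bool !ffunE inordK // mul2n -addnn.
by congr (_ + (_ + _)); apply: eq_bigr => i _; rewrite ffunE inordK // ltnS g_le.
Qed.

End Colouring.

Section ProperColouring.

Variables (k : nat) (c : {ffun dw_vertex n -> 'I_k}).
Hypothesis c_proper : properb (@dw_adj n) c.

Lemma dw_hub_neq b i : (c None : nat) != c (Some (b, i)).
Proof. exact: properb_neq c_proper (dw_adj_hub b i). Qed.

Lemma dw_rim_neq b i : (c (Some (b, i)) : nat) != c (Some (b, ordS i)).
Proof. exact: properb_neq c_proper (dw_adj_rim b i). Qed.

End ProperColouring.

End DoubleWheel.

Definition dw_even_colouring n : {ffun dw_vertex n -> 'I_3} :=
  dw_colouring n 2 0 (fun j => if odd j then 1 else 2).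

(* The last rim vertex gets its own colour, which breaks the parity clash on an odd cycle. *)
Definition dw_odd_colouring n : {ffun dw_vertex n -> 'I_4} :=
  dw_colouring n 3 0 (fun j => if j == n.-1 then 1 else if odd j then 2 else 3).

Lemma dw_even_colouring_proper n : ~~ odd n -> properb (@dw_adj n) (dw_even_colouring n).
Proof.
move=> en; apply: dw_colouring_proper => [//|j _|j _|j _]; try by case: odd.
by rewrite odd_mod ?(negbTE en) //=; case: odd.
Qed.

Lemma dw_odd_colouring_proper n : 3 <= n -> odd n -> properb (@dw_adj n) (dw_odd_colouring n).
Proof.
move=> n_ge3 on; apply: dw_colouring_proper => [//|j _|j _|j j_lt]; try by repeat case: ifP.
have [j_last|j_inner] := eqVneq j n.-1.
- have -> : j.+1 %% n = 0 by rewrite j_last prednK ?modnn //; lia.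
  by rewrite (_ : 0 == n.-1 = false) //; apply/eqP; rewrite -subn1; lia.
- rewrite modn_small; last by lia.
  by case: (j.+1 == n.-1) => //=; case: odd.
Qed.

Lemma colour_sum_dw_even n : ~~ odd n -> colour_sum (dw_even_colouring n) = 5 * n + 1.
Proof.
move=> en; rewrite colour_sum_dw_colouring // => [|j _]; last by case: odd.
have [m n_eq] : exists m, n = m.*2 by exists n./2; rewrite -[LHS]odd_double_half (negbTE en).
rewrite n_eq (eq_bigr (fun j => if odd j then 2 else 3)) => [|j _]; last by case: odd.
by rewrite sum_alternating -mul2n; lia.
Qed.

Lemma colour_sum_dw_odd n : odd n -> colour_sum (dw_odd_colouring n) = 7 * n - 2.
Proof.
move=> on; rewrite colour_sum_dw_colouring // => [|j _]; last by repeat case: ifP.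
have [m n_eq] : exists m, n = m.*2.+1 by exists n./2; rewrite -[LHS]odd_double_half on.
rewrite n_eq big_nat_recr //= eqxx.
rewrite (eq_big_nat _ _ (F2 := fun j => if odd j then 3 else 4)) => [|j /andP[_ j_lt]].
  by rewrite sum_alternating -mul2n; lia.
by rewrite ltn_eqF //; case: odd.
Qed.

Lemma dw_colours_ge3 n k (c : {ffun dw_vertex n -> 'I_k}) :
  0 < n -> properb (@dw_adj n) c -> 3 <= k.
Proof.
move=> n_gt0 hc; pose i0 : 'I_n := Ordinal n_gt0.
exact: triangle_colours hc (dw_adj_hub false i0) (dw_adj_rim false i0) (dw_adj_hub false _).
Qed.

Lemma dw_colours_ge4 n k (c : {ffun dw_vertex n -> 'I_k}) :
  odd n -> properb (@dw_adj n) c -> 4 <= k.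
Proof.
move=> on hc; rewrite leqNgt; apply/negP => k_lt4.
have [y [z two_colours]] :
    exists y z : nat, forall i, (c (Some (false, i)) : nat) = y \/ c (Some (false, i)) = z :> nat.
  move: (c None) (dw_hub_neq hc false) => [h h_lt] /= hub_neq.
  have : h = 0 \/ h = 1 \/ h = 2 by lia.
  by case=> [h0|[h1|h2]]; [exists 1, 2 | exists 0, 2 | exists 0, 1] => i;
    move: (c (Some (false, i))) (hub_neq i) => [v v_lt] /=; lia.
by move: on; apply/negP; exact: two_colour_cycle_even (dw_rim_neq hc false) two_colours.
Qed.

Lemma dw_chromatic_even n : 3 <= n -> ~~ odd n -> chromatic_number (@dw_adj n) = 3.
Proof.
move=> n_ge3 en; apply: chromatic_numberE; first by rewrite card_dw_vertex; lia.
  by apply/existsP; exists (dw_even_colouring n); exact: dw_even_colouring_proper.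
move=> k k_lt; apply/existsPn => c; apply/negP => /(dw_colours_ge3 _); lia.
Qed.

Lemma dw_chromatic_odd n : 3 <= n -> odd n -> chromatic_number (@dw_adj n) = 4.
Proof.
move=> n_ge3 on; apply: chromatic_numberE; first by rewrite card_dw_vertex; lia.
  by apply/existsP; exists (dw_odd_colouring n); exact: dw_odd_colouring_proper.
move=> k k_lt; apply/existsPn => c; apply/negP => /(dw_colours_ge4 on); lia.
Qed.

Lemma dw_colour_sum_le_even n (c : {ffun dw_vertex n -> 'I_3}) :
  0 < n -> properb (@dw_adj n) c -> colour_sum c <= 5 * n + 1.
Proof.
move=> n_gt0 hc; apply: dw_colour_sum_le => b.
apply: (cycle_sum_le_3colours (f := fun i => (c (Some (b, i)) : nat).+1)) => //= i.
- by rewrite eqSS; exact: dw_rim_neq.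
- by rewrite ltn_ord eqSS eq_sym dw_hub_neq.
Qed.

Lemma dw_colour_sum_le_odd n (c : {ffun dw_vertex n -> 'I_4}) :
  3 <= n -> odd n -> properb (@dw_adj n) c -> colour_sum c <= 7 * n - 2.
Proof.
move=> n_ge3 on hc; apply: dw_colour_sum_le => b.
apply: (odd_cycle_sum_le_4colours (f := fun i => (c (Some (b, i)) : nat).+1)) => //= i.
- by rewrite eqSS; exact: dw_rim_neq.
- by rewrite ltn_ord eqSS eq_sym dw_hub_neq.
Qed.

Theorem proposition2p2 (n : nat) (hn : 3 <= n) :
  chi_plus (@dw_adj n) = if odd n then 7 * n - 2 else 5 * n + 1.
Proof.
case: ifP => [on|/negbT en].
- apply: (chi_plusE (dw_chromatic_odd hn on) (dw_odd_colouring_proper hn on)).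
    exact: colour_sum_dw_odd.
  by move=> c; exact: dw_colour_sum_le_odd.
- apply: (chi_plusE (dw_chromatic_even hn en) (dw_even_colouring_proper en)).
    exact: colour_sum_dw_even.
  by move=> c; apply: dw_colour_sum_le_even; lia.
Qed.
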